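(* Let $\Lambda$ be an ordinal with $2\leq\Lambda\leq\omega$. Then there is a family $\langle a(n,v,i): n\in\omega,\ v\in{}^{2n}\omega,\ i\in\Lambda\cap(n+1)\rangle$ such that (a1) $a(n,v,i)\in{}^{n}\omega$ for all $n\in\omega$, $v\in{}^{2n}\omega$, $i\in\Lambda\cap(n+1)$; (a2) for all $n\in\omega$, $v\in{}^{2n}\omega$ and $m\in\omega$, $$\Big(\big(\prod_{i\in\Lambda\cap(n+1)}\widetilde{\mathbf{S}}^{m}_{a(n,v,i)}\big)\setminus\big(\prod_{i\in\Lambda\cap(n+1)}\widetilde{\mathbf{S}}^{m+1}_{a(n,v,i)}\big)\Big)\cdot{}^{\Lambda\cap\{n+1\}}({}^{\omega}\omega)$$ is the union of the pairwise disjoint sets $\prod_{i\in\Lambda\cap(n+2)}\mathbf{S}_{a(n+1,v^\frown\langle m,l\rangle,i)}$, $l\in\omega$.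
   Context: Ordinals are von Neumann ordinals: $n=\{0,\dots,n-1\}$, $\omega=\{0,1,2,\dots\}$. ${}^{B}A$ is the set of all functions from $B$ to $A$ (so ${}^{\varnothing}A=\{\varnothing\}$); ${}^{n}\omega$ is the set of sequences of natural numbers of length $n$; $v^\frown\langle m,l\rangle$ is the sequence $v$ extended by the two terms $m,l$. For $x\in{}^{<\omega}\omega$, $\mathbf{S}_x=\{p\in{}^{\omega}\omega: x\subseteq p\}$ (infinite sequences extending $x$), and for $m\in\omega$, $\widetilde{\mathbf{S}}^{m}_{x}=\bigcup\{\mathbf{S}_{x^\frown\langle l\rangle}: l\in\omega\setminus m\}$. For an index set $I$, $\prod_{i\in I}D_i$ is the set of functions $p$ with domain $I$ and $p(i)\in D_i$ for all $i\in I$. For sets of functions $E\subseteq{}^{A}C$, $F\subseteq{}^{B}C$ with $A\cap B=\varnothing$, $E\cdot F=\{e\cup f: e\in E,\ f\in F\}$, i.e. the set of $p\in{}^{A\cup B}C$ with $p\restriction A\in E$ and $p\restriction B\in F$. *)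

From mathcomp Require Import all_boot.
Set Implicit Arguments. Unset Strict Implicit. Unset Printing Implicit Defensive.

(* Ordinals Lambda with Lambda <= omega are encoded as [option nat]:
   [Some k] is the finite ordinal k, [None] is omega. *)
Definition inOrd (L : option nat) (i : nat) : bool :=
  if L is Some k then i < k else true.

Definition capOrd (L : option nat) (n : nat) (i : nat) : bool :=
  inOrd L i && (i < n).

Definition capSing (L : option nat) (n : nat) (i : nat) : bool :=
  inOrd L i && (i == n).

(* Infinite sequences in ^omega omega are functions nat -> nat;
   finite sequences in ^{<omega} omega are [seq nat]. *)
Definition Sx (x : seq nat) (p : nat -> nat) : Prop :=
  forall j, j < size x -> p j = nth 0 x j.

Definition Stilde (m : nat) (x : seq nat) (p : nat -> nat) : Prop :=
  exists l, m <= l /\ Sx (rcons x l) p.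

(* Elements of a product indexed by I ⊆ nat are represented by total
   functions P : nat -> (nat -> nat); membership only looks at indices in I. *)
Definition prodD (I : nat -> bool) (D : nat -> (nat -> nat) -> Prop)
  (P : nat -> nat -> nat) : Prop :=
  forall i, I i -> D i (P i).

Definition allFun (I : nat -> bool) (P : nat -> nat -> nat) : Prop := True.

(* E · F for sets E, F of functions on disjoint domains A, B:
   p|A in E and p|B in F. *)
Definition dotp (E F : (nat -> nat -> nat) -> Prop) (P : nat -> nat -> nat) : Prop :=
  E P /\ F P.

Definition setDiff (E F : (nat -> nat -> nat) -> Prop) (P : nat -> nat -> nat) : Prop :=
  E P /\ ~ F P.

(* For P in the left-hand set of (a2), every P_i with i in Lambda ∩ (n+1) extends
   a(n,v,i) and has P_i(n) >= m, with equality for at least one i.  Relative to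
   these prefixes P is described, up to the next level, by its code: the offsets
   P_i(n) - m (a sequence containing 0) and, if n+1 is in Lambda, the first n+1
   values of P_{n+1}.  The possible codes form a countably infinite set (if n+1 is
   not in Lambda this needs |Lambda ∩ (n+1)| >= 2, hence Lambda >= 2), so we fix an
   enumeration l |-> e_n(l) of them and let a(n+1, v^<m,l>, .) extend a(n,v,.) as
   prescribed by e_n(l).  The blocks indexed by l are then exactly the fibres of
   the code map, which makes them pairwise disjoint with union the left-hand set. *)

From mathcomp Require Import all_boot.
From mathcomp Require Import boolp classical_sets functions cardinality.

Set Implicit Arguments.
Unset Strict Implicit.
Unset Printing Implicit Defensive.

Local Open Scope classical_set_scope.

Lemma countable_inj_nat_bij T (Z : set T) (g : nat -> T) :
  countable Z -> (forall k, Z (g k)) -> injective g ->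
  exists f : nat -> T, set_bij [set: nat] Z f.
Proof.
elim/Ppointed: T => T in Z g *; first by have := no (g 0).
move=> Zcount Zg g_inj; apply/card_set_bijP/card_esym/eq_card_nat => //.
apply/infiniteP/pcard_leP/injfunPex; exists g => [k _|k k' _ _]; [exact: Zg|exact: g_inj].
Qed.

Lemma Sx_rcons x c p : Sx (rcons x c) p <-> Sx x p /\ p (size x) = c.
Proof.
rewrite /Sx size_rcons; split=> [Sp|[Sp <-] j].
  split=> [j lt_jx|]; last by rewrite Sp // nth_rcons ltnn eqxx.
  by rewrite Sp ?nth_rcons ?lt_jx // ltnS ltnW.
rewrite ltnS leq_eqVlt => /orP[/eqP ->|lt_jx]; first by rewrite nth_rcons ltnn eqxx.
by rewrite nth_rcons lt_jx Sp.
Qed.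

Lemma StildeE m x p : Stilde m x p <-> Sx x p /\ m <= p (size x).
Proof.
split=> [[l [le_ml /Sx_rcons[Sp ->]]] //|[Sp le_mp]].
by exists (p (size x)); split=> //; apply/Sx_rcons.
Qed.

Definition capWidth (L : option nat) n : nat :=
  if L is Some k then minn k n.+1 else n.+1.

Lemma capOrdE L n i : capOrd L n.+1 i = (i < capWidth L n).
Proof. by case: L => [k|] //=; rewrite /capOrd /= ltn_min. Qed.

Lemma capOrdS L n i : i <= n -> capOrd L n.+2 i = capOrd L n.+1 i.
Proof. by move=> le_in; rewrite /capOrd !ltnS le_in (leqW le_in). Qed.

Lemma capOrd_max L n : capOrd L n.+2 n.+1 = inOrd L n.+1.
Proof. by rewrite /capOrd ltnSn andbT. Qed.

Lemma capOrdSP L n i : capOrd L n.+2 i ->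
  (i <= n /\ capOrd L n.+1 i) \/ (i = n.+1 /\ inOrd L n.+1).
Proof.
case: (leqP i n) => [le_in|lt_ni]; first by rewrite capOrdS //; left.
move=> Ci; right; have e_i : i = n.+1 by apply/eqP; rewrite eqn_leq lt_ni andbT; case/andP: Ci.
by split=> //; move: Ci; rewrite e_i capOrd_max.
Qed.

Definition is_code L n (z : seq nat * seq nat) : Prop :=
  [/\ size z.1 = capWidth L n, 0 \in z.1 & size z.2 = if inOrd L n.+1 then n.+1 else 0].

(* Meaningful only when [m <= P i n] for the listed [i]: subtraction is truncated. *)
Definition code L n m (P : nat -> nat -> nat) : seq nat * seq nat :=
  ([seq P i n - m | i <- iota 0 (capWidth L n)],
   if inOrd L n.+1 then mkseq (P n.+1) n.+1 else [::]).

Definition extend n (b : nat -> seq nat) m (z : seq nat * seq nat) i : seq nat :=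
  if i <= n then rcons (b i) (m + nth 0 z.1 i) else z.2.

Section Refinement.

Variables (L : option nat) (n m : nat) (b : nat -> seq nat).
Hypothesis size_b : forall i, capOrd L n.+1 i -> size (b i) = n.

Lemma size_extend z : size z.2 = (if inOrd L n.+1 then n.+1 else 0) ->
  forall i, capOrd L n.+2 i -> size (extend n b m z i) = n.+1.
Proof.
move=> size_z2 i /capOrdSP[[le_in Ci]|[-> top]]; rewrite /extend.
  by rewrite le_in size_rcons size_b.
by rewrite ltnn size_z2 top.
Qed.

Lemma extend_code P : prodD (capOrd L n.+1) (fun i => Stilde m (b i)) P ->
  prodD (capOrd L n.+2) (fun i => Sx (extend n b m (code L n m P) i)) P.
Proof.
move=> above i /capOrdSP[[le_in Ci]|[-> top]]; rewrite /extend.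
  have /StildeE[Sb] := above i Ci; rewrite size_b // => le_m.
  rewrite le_in; apply/Sx_rcons; rewrite size_b //; split=> //.
  by rewrite (nth_map 0) ?nth_iota ?size_iota -?capOrdE // add0n subnKC.
by rewrite ltnn /= top => j; rewrite size_mkseq => lt_j; rewrite nth_mkseq.
Qed.

Lemma code_extend z P :
  size z.1 = capWidth L n -> size z.2 = (if inOrd L n.+1 then n.+1 else 0) ->
  prodD (capOrd L n.+2) (fun i => Sx (extend n b m z i)) P ->
  prodD (capOrd L n.+1) (fun i => Stilde m (b i)) P /\ code L n m P = z.
Proof.
move=> size_z1 size_z2 inP.
have low i : capOrd L n.+1 i -> Sx (b i) (P i) /\ P i n = m + nth 0 z.1 i.
  move=> Ci; have le_in : i <= n by case/andP: Ci.
  by have := inP i; rewrite capOrdS // /extend le_in => /(_ Ci)/Sx_rcons; rewrite size_b.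
split=> [i Ci|].
  by apply/StildeE; rewrite size_b //; have [Sb ->] := low i Ci; rewrite leq_addr.
rewrite [z]surjective_pairing /code; congr pair.
  apply: (@eq_from_nth _ 0) => [|i]; rewrite size_map size_iota ?size_z1 // => lt_i.
  rewrite (nth_map 0) ?size_iota // nth_iota // add0n /=.
  by have [_ ->] := low i (etrans (capOrdE L n i) lt_i); rewrite addKn.
case top: (inOrd L n.+1) size_z2 => size_z2; last by rewrite (size0nil size_z2).
apply: (@eq_from_nth _ 0) => [|j]; rewrite size_mkseq ?size_z2 // => lt_j.
have := inP n.+1; rewrite capOrd_max top /extend ltnn => /(_ isT j).
by rewrite nth_mkseq // size_z2 => ->.
Qed.

Lemma code_zero P : prodD (capOrd L n.+1) (fun i => Stilde m (b i)) P ->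
  is_code L n (code L n m P) <-> ~ prodD (capOrd L n.+1) (fun i => Stilde m.+1 (b i)) P.
Proof.
move=> above.
have strict i : capOrd L n.+1 i -> Stilde m.+1 (b i) (P i) <-> P i n != m.
  move=> Ci; have /StildeE[Sb] := above i Ci; rewrite size_b // => le_m.
  by rewrite StildeE size_b // ltn_neqAle le_m andbT eq_sym; split=> [[]|].
have size_code2 : size (code L n m P).2 = if inOrd L n.+1 then n.+1 else 0.
  by rewrite /=; case: ifP; rewrite ?size_mkseq.
rewrite /is_code size_code2 /= size_map size_iota.
split=> [[_ /mapP[i i_w /esym/eqP Pm0] _] strictly | not_above].
  have Ci : capOrd L n.+1 i by move: i_w; rewrite mem_iota capOrdE.
  have /StildeE[_] := above i Ci; rewrite size_b // => le_m.
  by move/(strict i Ci): (strictly i Ci); rewrite eqn_leq le_m -subn_eq0 Pm0.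
split=> //; apply/mapP; apply: contra_notP not_above => no0 i Ci; apply/(strict i Ci)/eqP => e.
by apply: no0; exists i; rewrite ?mem_iota -?capOrdE ?e ?subnn.
Qed.

End Refinement.

Fixpoint tree (e : nat -> nat -> seq nat * seq nat) n v : nat -> seq nat :=
  if n is n'.+1 then
    extend n' (tree e n' (take (2 * n') v)) (nth 0 v (2 * n')) (e n' (nth 0 v (2 * n').+1))
  else fun=> [::].

Lemma tree_cat e n v m l : size v = 2 * n ->
  tree e n.+1 (v ++ [:: m; l]) = extend n (tree e n v) m (e n l).
Proof.
by move=> size_v /=; rewrite -size_v take_size_cat // !nth_cat ltnn ltnNge leqnSn subnn subSnn.
Qed.

Lemma size_tree L e : (forall n k, is_code L n (e n k)) ->
  forall n v i, size v = 2 * n -> capOrd L n.+1 i -> size (tree e n v i) = n.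
Proof.
move=> e_code; elim=> [//|n IH] v i size_v /=.
have [_ _ size_e2] := e_code n (nth 0 v (2 * n).+1).
have size_take : size (take (2 * n) v) = 2 * n.
  by rewrite size_takel // size_v leq_mul2l leqnSn orbT.
by apply: (size_extend _ _ size_e2) => j; apply: IH.
Qed.

Lemma capWidth_inOrd L n : inOrd L n.+1 -> capWidth L n = n.+1.
Proof. by case: L => [k /= lt_nk|//]; rewrite (minn_idPr (ltnW lt_nk)). Qed.

Lemma capWidth_ge2 L n : (forall k, L = Some k -> 2 <= k) ->
  ~~ inOrd L n.+1 -> 2 <= capWidth L n.
Proof.
case: L => [k /(_ k erefl) ge2_k /=|//]; rewrite -leqNgt => le_kn.
by rewrite (minn_idPl le_kn).
Qed.

Lemma is_code_inj_nat L n : (forall k, L = Some k -> 2 <= k) ->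
  exists g : nat -> seq nat * seq nat, (forall k, is_code L n (g k)) /\ injective g.
Proof.
move=> L_ge2; case top: (inOrd L n.+1).
  exists (fun k => (nseq n.+1 0, k :: nseq n 0)); split=> [k|k k' [] //].
  by split; rewrite /= ?top ?size_nseq ?capWidth_inOrd ?mem_nseq.
have ge2_w := capWidth_ge2 L_ge2 (negbT top).
exists (fun k => (0 :: k :: nseq (capWidth L n - 2) 0, [::])); split=> [k|k k' [] //].
by split; rewrite /= ?top ?inE ?eqxx // size_nseq -addn2 subnK.
Qed.

Theorem lemma11 (L : option nat) (hL : forall k, L = Some k -> 2 <= k) :
  exists a : nat -> seq nat -> nat -> seq nat,
    (* (a1) *)
    (forall n v i, size v = 2 * n -> capOrd L n.+1 i -> size (a n v i) = n) /\
    (* (a2) *)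
    (forall n v m, size v = 2 * n ->
       (forall P : nat -> nat -> nat,
          dotp (setDiff (prodD (capOrd L n.+1) (fun i => Stilde m (a n v i)))
                        (prodD (capOrd L n.+1) (fun i => Stilde m.+1 (a n v i))))
               (allFun (capSing L n.+1)) P
          <-> exists l, prodD (capOrd L n.+2)
                          (fun i => Sx (a n.+1 (v ++ [:: m; l]) i)) P) /\
       (forall l l' (P : nat -> nat -> nat), l <> l' ->
          prodD (capOrd L n.+2) (fun i => Sx (a n.+1 (v ++ [:: m; l]) i)) P ->
          ~ prodD (capOrd L n.+2) (fun i => Sx (a n.+1 (v ++ [:: m; l']) i)) P)).
Proof.
have enum n : exists e : nat -> seq nat * seq nat, set_bij [set: nat] (is_code L n) e.
  have [g [g_code g_inj]] := is_code_inj_nat n hL.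
  exact: countable_inj_nat_bij (countableP _) g_code g_inj.
have [e e_bij] := choice enum.
have e_code n k : is_code L n (e n k) by have [/(_ k I)] := e_bij n.
exists (tree e); split=> [|n v m size_v]; first exact: size_tree.
have size_b := size_tree e_code size_v.
have block_code l P : prodD (capOrd L n.+2) (fun i => Sx (tree e n.+1 (v ++ [:: m; l]) i)) P ->
    prodD (capOrd L n.+1) (fun i => Stilde m (tree e n v i)) P /\ code L n m P = e n l.
  by have [size1 _ size2] := e_code n l; rewrite tree_cat //; apply: code_extend.
split=> [P|l l' P ne_ll' /block_code[_ code_l] /block_code[_ code_l']]; last first.
  by have [_ e_inj _] := e_bij n; apply/ne_ll'/e_inj; rewrite ?in_setT // -code_l -code_l'.
split=> [[[above /(code_zero size_b above) code_P] _]|[l /block_code[above code_P]]].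
  have [_ _ /(_ _ code_P)[l _ e_l]] := e_bij n.
  by exists l; rewrite tree_cat // e_l; apply: extend_code.
by split=> //; split=> //; apply/(code_zero size_b above); rewrite code_P.
Qed.
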